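(* Let $k$ be a $\Delta=\{\partial_0,\ldots,\partial_m\}$-field and let $L$ be a parameterized liouvillian extension of $k$. Then $L=\bigcup_{i\in\mathbb N}L_i$ for a chain of fields $k=L_0\subset L_1\subset\cdots$ with $L_{i+1}=L_i(\{t_{i,j}\}_{j\in\mathbb N})$, where $\{t_{i,j}\}$ is a set of elements such that for each $j$ either $\partial_0t_{i,j}\in L_i$, or $t_{i,j}\ne0$ and $\partial_0t_{i,j}/t_{i,j}\in L_i$, or $t_{i,j}$ is algebraic over $L_i$.
   Context: All fields have characteristic zero. $C_L^0$ denotes the $\partial_0$-constants of $L$, and $L\langle t\rangle_\Delta$ the field generated over $L$ by $t$ and all its derivatives with respect to $\Delta$. A $\Delta$-field $L\supset k$ is a parameterized liouvillian extension of $k$ if $C_L^0=C_k^0$ and there is a tower of $\Delta$-fields $k=M_0\subset M_1\subset\cdots\subset M_r=L$ with $M_i=M_{i-1}\langle s_i\rangle_\Delta$ where for each $i$ either $\partial_0s_i\in M_{i-1}$, or $s_i\ne0$ and $\partial_0s_i/s_i\in M_{i-1}$, or $s_i$ is algebraic over $M_{i-1}$. *)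

From mathcomp Require Import all_boot all_algebra.
Set Implicit Arguments. Unset Strict Implicit. Unset Printing Implicit Defensive.
Import GRing.Theory.
Local Open Scope ring_scope.

Definition is_derivation (L : fieldType) (D : L -> L) : Prop :=
  (forall x y, D (x + y) = D x + D y) /\
  (forall x y, D (x * y) = D x * y + x * D y).

Definition is_Delta_field (L : fieldType) (m : nat) (d : 'I_m.+1 -> L -> L) : Prop :=
  (forall i, is_derivation (d i)) /\ (forall i j x, d i (d j x) = d j (d i x)).

Definition is_subfield (L : fieldType) (M : L -> Prop) : Prop :=
  [/\ M 0, M 1, (forall x y, M x -> M y -> M (x - y)),
      (forall x y, M x -> M y -> M (x * y)) & (forall x, M x -> M x^-1)].

Definition is_Delta_subfield (L : fieldType) (m : nat) (d : 'I_m.+1 -> L -> L)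
  (M : L -> Prop) : Prop :=
  is_subfield M /\ (forall i x, M x -> M (d i x)).

Definition field_gen (L : fieldType) (M S : L -> Prop) : L -> Prop :=
  fun x => forall F : L -> Prop, is_subfield F ->
    (forall y, M y -> F y) -> (forall y, S y -> F y) -> F x.

Definition derivatives (L : fieldType) (m : nat) (d : 'I_m.+1 -> L -> L) (s : L)
  : L -> Prop := fun y => exists w : seq 'I_m.+1, y = foldr d s w.

Definition Delta_gen (L : fieldType) (m : nat) (d : 'I_m.+1 -> L -> L)
  (M : L -> Prop) (s : L) : L -> Prop :=
  field_gen M (derivatives d s).

Definition algebraic_over (L : fieldType) (M : L -> Prop) (t : L) : Prop :=
  exists p : {poly L}, [/\ p != 0, (forall i, M p`_i) & root p t].

Definition liouvillian_elt (L : fieldType) (m : nat) (d : 'I_m.+1 -> L -> L)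
  (M : L -> Prop) (t : L) : Prop :=
  M (d ord0 t) \/ (t != 0 /\ M (d ord0 t / t)) \/ algebraic_over M t.

Definition param_liouvillian (L : fieldType) (m : nat) (d : 'I_m.+1 -> L -> L)
  (k : L -> Prop) : Prop :=
  (* C_L^0 = C_k^0 *)
  (forall x, d ord0 x = 0 -> k x) /\
  exists (r : nat) (M : nat -> L -> Prop) (s : nat -> L),
    [/\ (forall x, M 0%N x <-> k x),
        (forall x, M r x) &
        (forall i, (0 < i <= r)%N ->
           (forall x, M i x <-> Delta_gen d (M i.-1) (s i) x) /\
           liouvillian_elt d (M i.-1) (s i))].

From mathcomp Require Import all_boot all_algebra.
From mathcomp Require Import ring.
From Stdlib Require Import IndefiniteDescription.
Set Implicit Arguments. Unset Strict Implicit. Unset Printing Implicit Defensive.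
Import GRing.Theory.
Local Open Scope ring_scope.

(* Each step M<s>_Delta of the tower is M(T) for a countable family T of
   elements that are liouvillian over M itself.  If d_0 s lies in M, take all
   derivatives theta s: d_0 (theta s) = theta (d_0 s) stays in M.  If
   d_0 s / s = a lies in M, take s together with all theta (d_l s / s): these
   generate a Delta-closed field because d_l s = s * (d_l s / s), and
   d_0 (theta (d_l s / s)) = theta (d_l a) lies in M.  If s is algebraic over M,
   then in characteristic zero every derivative of s already lies in M(s).
   Padding the finite tower with trivial steps gives the infinite chain. *)

Definition range (T I : Type) (f : I -> T) : T -> Prop := fun y => exists i, y = f i.

Lemma deriv_neq0_pchar0 (R : idomainType) (p : {poly R}) :
  [pchar R] =i pred0 -> (1 < size p)%N -> p^`() != 0.
Proof.
move=> R0 gt1_p; apply/eqP => /(congr1 (fun q : {poly R} => q`_(size p).-2)).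
rewrite coef_deriv coef0.
have -> : (size p).-2.+1 = (size p).-1 by case: (size p) gt1_p => [|[|n]].
rewrite -lead_coefE -mulr_natr => /eqP.
rewrite mulf_eq0 lead_coef_eq0 -size_poly_eq0 (pcharf0P _).1 //.
by case: (size p) gt1_p => [|[|n]].
Qed.

Section Subfields.
Variable L : fieldType.
Implicit Types (F G M N S : L -> Prop) (x y : L).

Lemma subfield0 F : is_subfield F -> F 0. Proof. by case. Qed.

Lemma subfieldB F : is_subfield F -> forall x y, F x -> F y -> F (x - y).
Proof. by case. Qed.

Lemma subfieldM F : is_subfield F -> forall x y, F x -> F y -> F (x * y).
Proof. by case. Qed.

Lemma subfieldV F : is_subfield F -> forall x, F x -> F x^-1.
Proof. by case. Qed.

Lemma subfieldN F : is_subfield F -> forall x, F x -> F (- x).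
Proof.
by move=> hF x Fx; rewrite -sub0r; apply: subfieldB => //; apply: subfield0.
Qed.

Lemma subfieldD F : is_subfield F -> forall x y, F x -> F y -> F (x + y).
Proof.
by move=> hF x y Fx Fy; rewrite -[y]opprK; apply: subfieldB => //; apply: subfieldN.
Qed.

Lemma subfieldMn F : is_subfield F -> forall x n, F x -> F (x *+ n).
Proof.
move=> hF x n Fx; elim: n => [|n IHn]; first by rewrite mulr0n; apply: subfield0.
by rewrite mulrS; apply: (subfieldD hF).
Qed.

Lemma subfield_horner F : is_subfield F -> forall (p : {poly L}) x,
  (forall i, F p`_i) -> F x -> F p.[x].
Proof.
move=> hF; elim/poly_ind => [|p c IHp] x Fp Fx; first by rewrite horner0; apply: subfield0.
rewrite hornerMXaddC; apply: (subfieldD hF); last first.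
  by have := Fp 0%N; rewrite coefD coefMX coefC add0r.
apply: (subfieldM hF _ Fx); apply: IHp => // i.
by have := Fp i.+1; rewrite coefD coefMX coefC addr0.
Qed.

Lemma field_gen_subfield M S : is_subfield (field_gen M S).
Proof.
split=> [F hF _ _|F hF _ _|x y Mx My F hF hM hS|x y Mx My F hF hM hS|x Mx F hF hM hS].
- exact: subfield0.
- by case: hF.
- by apply: subfieldB; [|apply: Mx|apply: My].
- by apply: subfieldM; [|apply: Mx|apply: My].
- by apply: subfieldV; [|apply: Mx].
Qed.

Lemma field_gen_base M S y : M y -> field_gen M S y.
Proof. by move=> My F _ hM _; apply: hM. Qed.

Lemma field_gen_gens M S y : S y -> field_gen M S y.
Proof. by move=> Sy F _ _ hS; apply: hS. Qed.

Lemma field_gen_min M S F : is_subfield F -> (forall y, M y -> F y) ->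
  (forall y, S y -> F y) -> forall x, field_gen M S x -> F x.
Proof. by move=> hF hM hS x; apply. Qed.

Lemma field_gen_eqv N S S' :
  (forall y, S y -> field_gen N S' y) -> (forall y, S' y -> field_gen N S y) ->
  forall x, field_gen N S x <-> field_gen N S' x.
Proof.
move=> SS' S'S x; split;
  by apply: field_gen_min (field_gen_subfield _ _) _ _ x => // y; apply: field_gen_base.
Qed.

Lemma field_gen_id N S : is_subfield N -> (forall y, S y -> N y) ->
  forall x, field_gen N S x <-> N x.
Proof. by move=> hN SN x; split; [apply: field_gen_min|apply: field_gen_base]. Qed.

Lemma nat_indexed_generators (P G N : L -> Prop) (I : countType) (i0 : I) (f : I -> L) :
  (forall x, G x <-> field_gen N (range f) x) -> (forall i, P (f i)) ->
  exists T : nat -> L, (forall x, G x <-> field_gen N (range T) x) /\ (forall j, P (T j)).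
Proof.
move=> Gf Pf; exists (fun j => f (odflt i0 (unpickle j))); split=> [x|j] //.
rewrite Gf; apply: field_gen_eqv => _ [i ->]; apply: field_gen_gens.
  by exists (pickle i); rewrite pickleK.
by exists (odflt i0 (unpickle i)).
Qed.

End Subfields.

Section Derivation.
Variables (L : fieldType) (D : L -> L).
Hypothesis hD : is_derivation D.

Lemma derD x y : D (x + y) = D x + D y. Proof. by case: hD. Qed.

Lemma derM x y : D (x * y) = D x * y + x * D y. Proof. by case: hD. Qed.

Lemma der0 : D 0 = 0.
Proof. by apply/eqP; rewrite -[X in X == _](addrK (D 0)) -derD addr0 subrr. Qed.

Lemma derN x : D (- x) = - D x.
Proof. by apply/eqP; rewrite -subr_eq0 opprK -derD addNr der0. Qed.

Lemma derB x y : D (x - y) = D x - D y. Proof. by rewrite derD derN. Qed.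

Lemma der1 : D 1 = 0.
Proof.
by have := derM 1 1; rewrite !mulr1 mul1r => /esym/eqP; rewrite -subr_eq0 addrK => /eqP.
Qed.

Lemma derV x : x != 0 -> D x^-1 = - D x / x ^+ 2.
Proof.
move=> x_neq0; have := derM x x^-1; rewrite divff // der1 => /esym/eqP.
rewrite addr_eq0 => /eqP Dx; apply: (mulfI x_neq0); rewrite -[x * _]opprK -Dx; field.
by rewrite x_neq0.
Qed.

Lemma field_gen_der_sub (M S G : L -> Prop) : is_subfield G ->
  (forall y, M y -> G y /\ G (D y)) -> (forall y, S y -> G y /\ G (D y)) ->
  forall x, field_gen M S x -> G (D x).
Proof.
move=> hG hM hS x /(field_gen_min (F := fun x => G x /\ G (D x))) [] //.
split=> [||x1 x2 [G1 GD1] [G2 GD2]|x1 x2 [G1 GD1] [G2 GD2]|x1 [G1 GD1]].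
- by rewrite der0; split; apply: subfield0.
- by rewrite der1; split; [case: hG|apply: subfield0].
- by rewrite derB; split; apply: subfieldB.
- rewrite derM; split; first exact: subfieldM.
  exact (subfieldD hG (subfieldM hG GD1 G2) (subfieldM hG G1 GD2)).
- split; first exact: subfieldV.
  have [->|x1_neq0] := eqVneq x1 0; first by rewrite invr0 der0; apply: subfield0.
  rewrite derV // expr2.
  exact (subfieldM hG (subfieldN hG GD1) (subfieldV hG (subfieldM hG G1 G1))).
Qed.

Lemma der_horner_sub (G : L -> Prop) : is_subfield G -> forall (p : {poly L}) x,
  (forall i, G p`_i) -> (forall i, G (D p`_i)) -> G x ->
  G (D p.[x] - p^`().[x] * D x).
Proof.
move=> hG; elim/poly_ind => [|p c IHp] x Gp GDp Gx.
  by rewrite deriv0 !horner0 der0 mul0r subrr; apply: subfield0.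
have coefS i : (p * 'X + c%:P)`_i.+1 = p`_i by rewrite coefD coefMX coefC addr0.
have coef0 : (p * 'X + c%:P)`_0 = c by rewrite coefD coefMX coefC add0r.
rewrite hornerMXaddC derivMXaddC hornerD hornerMX derD derM.
have -> : D p.[x] * x + p.[x] * D x + D c - (p.[x] + p^`().[x] * x) * D x
   = (D p.[x] - p^`().[x] * D x) * x + D c by ring.
apply: (subfieldD hG); last by have := GDp 0%N; rewrite coef0.
apply: (subfieldM hG _ Gx); apply: IHp => // i; rewrite -coefS; [exact: Gp|exact: GDp].
Qed.

Hypothesis hchar : [pchar L] =i pred0.

(* Differentiating p(u) = 0 gives p'(u) D u = -(p^D)(u), where p^D applies D
   to the coefficients; descend to p' while p'(u) = 0. *)
Lemma der_algebraic_sub (N G : L -> Prop) u :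
  is_subfield N -> (forall y, N y -> N (D y)) ->
  is_subfield G -> (forall y, N y -> G y) -> G u ->
  algebraic_over N u -> G (D u).
Proof.
move=> hN DN hG NG Gu [p [p_neq0 Np pu]].
have [n lt_p_n] := ubnP (size p); elim: n => // n IHn in p lt_p_n p_neq0 Np pu *.
have Np' i : N p^`()`_i by rewrite coef_deriv; apply: (subfieldMn hN).
have [p'u0|p'u_neq0] := eqVneq p^`().[u] 0.
  apply: (IHn p^`()) => //; last by rewrite rootE p'u0.
    exact: leq_trans (lt_size_deriv p_neq0) _.
  by rewrite deriv_neq0_pchar0 ?(root_size_gt1 p_neq0 pu).
have := der_horner_sub hG (fun i => NG _ (Np i)) (fun i => NG _ (DN _ (Np i))) Gu.
rewrite (rootP pu) der0 sub0r => /(subfieldN hG); rewrite opprK => Gp'Du.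
rewrite -[D u]mul1r -(mulVf p'u_neq0) -mulrA.
apply: (subfieldM hG (subfieldV hG _) Gp'Du).
by apply: (subfield_horner hG) => // i; apply: NG.
Qed.

End Derivation.

Section DeltaTower.
Variables (L : fieldType) (m : nat) (d : 'I_m.+1 -> L -> L).
Hypothesis hder : forall i, is_derivation (d i).
Hypothesis hcomm : forall i j x, d i (d j x) = d j (d i x).

Lemma der_foldr i u (w : seq 'I_m.+1) : d i (foldr d u w) = foldr d (d i u) w.
Proof. by elim: w => //= j w IHw; rewrite hcomm IHw. Qed.

Lemma derivatives_sub (G : L -> Prop) u : (forall i y, G y -> G (d i y)) -> G u ->
  forall y, derivatives d u y -> G y.
Proof. by move=> dG Gu _ [w ->]; elim: w => //= j w; apply: dG. Qed.

Lemma Delta_subfield_eqv (M M' : L -> Prop) : (forall x, M x <-> M' x) ->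
  is_Delta_subfield d M -> is_Delta_subfield d M'.
Proof.
move=> MM' [[M0 M1 MB MM MV] dM].
split; first split; rewrite -?MM' // => *; rewrite -MM'.
- by apply: MB; rewrite MM'.
- by apply: MM; rewrite MM'.
- by apply: MV; rewrite MM'.
- by apply: dM; rewrite MM'.
Qed.

Lemma Delta_gen_Delta_subfield (N : L -> Prop) u :
  is_Delta_subfield d N -> is_Delta_subfield d (Delta_gen d N u).
Proof.
move=> [_ dN]; split=> [|i x]; first exact: field_gen_subfield.
apply: (field_gen_der_sub (hder i) (field_gen_subfield _ _)) => y.
  by move=> Ny; split; apply: field_gen_base; [|apply: dN].
by move=> [w ->]; split; apply: field_gen_gens; [exists w|exists (i :: w)].
Qed.

Lemma logder_comm u l : u != 0 -> d ord0 (d l u / u) = d l (d ord0 u / u).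
Proof.
move=> u_neq0; rewrite !(derM (hder _)) !(derV (hder _)) // hcomm; ring.
Qed.

Lemma liouvillian_trivial_step (N : L -> Prop) : is_subfield N ->
  exists T : nat -> L, (forall x, N x <-> field_gen N (range T) x) /\
                       (forall j, liouvillian_elt d N (T j)).
Proof.
move=> hN; exists (fun _ => 0); split=> [x|j].
  by rewrite field_gen_id // => _ [_ ->]; apply: subfield0.
by left; rewrite (der0 (hder _)); apply: subfield0.
Qed.

Definition exp_family (u : L) (o : option (seq 'I_m.+1 * 'I_m.+1)) : L :=
  if o is Some (w, l) then foldr d (d l u / u) w else u.

Section Step.
Variables (N : L -> Prop) (u : L).
Hypothesis hN : is_Delta_subfield d N.

Lemma primitive_family_liouvillian w :
  N (d ord0 u) -> liouvillian_elt d N (foldr d u w).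
Proof.
by move=> Ndu; left; rewrite der_foldr; apply: (derivatives_sub hN.2 Ndu); exists w.
Qed.

Lemma exp_family_liouvillian o : u != 0 -> N (d ord0 u / u) ->
  liouvillian_elt d N (exp_family u o).
Proof.
case: o => [[w l]|] u_neq0 Na; last by right; left.
left; rewrite der_foldr logder_comm //.
by apply: (derivatives_sub hN.2 (hN.2 _ _ Na)); exists w.
Qed.

Lemma Delta_gen_exp_family : u != 0 ->
  forall x, Delta_gen d N u x <-> field_gen N (range (exp_family u)) x.
Proof.
move=> u_neq0; have [hDu dDu] := Delta_gen_Delta_subfield u hN.
have Du_u : Delta_gen d N u u by apply: field_gen_gens; exists [::].
apply: field_gen_eqv => y; last first.
  move=> [[[w l]|] ->] //=; apply: (derivatives_sub dDu); last by exists w.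
  by apply: (subfieldM hDu _ (subfieldV hDu Du_u)); apply: field_gen_gens; exists [:: l].
have hG := field_gen_subfield N (range (exp_family u)).
have Gf o : field_gen N (range (exp_family u)) (exp_family u o).
  by apply: field_gen_gens; exists o.
apply: (derivatives_sub _ (Gf None)) => l; apply: (field_gen_der_sub (hder l) hG) => z.
  by move=> Nz; split; apply: field_gen_base; [|apply: hN.2].
move=> [[[w l']|] ->]; split => //.
  by have := Gf (Some (l :: w, l')).
by have := subfieldM hG (Gf None) (Gf (Some ([::], l))); rewrite /= mulrC divfK.
Qed.

Hypothesis hchar : [pchar L] =i pred0.

Lemma Delta_gen_algebraic : algebraic_over N u ->
  forall x, Delta_gen d N u x <-> field_gen N (range (fun _ : unit => u)) x.
Proof.
move=> u_alg; have hG := field_gen_subfield N (range (fun _ : unit => u)).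
have Gu : field_gen N (range (fun _ : unit => u)) u by apply: field_gen_gens; exists tt.
apply: field_gen_eqv => y; last by move=> [_ ->]; apply: field_gen_gens; exists [::].
apply: (derivatives_sub _ Gu) => l; apply: (field_gen_der_sub (hder l) hG) => z.
  by move=> Nz; split; apply: field_gen_base; [|apply: hN.2].
move=> [_ ->]; split => //.
exact (der_algebraic_sub (hder l) hchar hN.1 (hN.2 l) hG
  (fun y Ny => field_gen_base Ny) Gu u_alg).
Qed.

Lemma liouvillian_step : liouvillian_elt d N u ->
  exists T : nat -> L, (forall x, Delta_gen d N u x <-> field_gen N (range T) x) /\
                       (forall j, liouvillian_elt d N (T j)).
Proof.
case=> [Ndu|[[u_neq0 Na]|u_alg]].
- by apply: (nat_indexed_generators [::] (f := foldr d u)) => // w;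
    apply: primitive_family_liouvillian.
- apply: (nat_indexed_generators None (Delta_gen_exp_family u_neq0)).
  by move=> o; apply: exp_family_liouvillian.
- apply: (nat_indexed_generators tt (Delta_gen_algebraic u_alg)).
  by move=> _; right; right.
Qed.

End Step.

End DeltaTower.

Theorem lemma9p14 (L : fieldType) (m : nat) (d : 'I_m.+1 -> L -> L)
  (k : L -> Prop)
  (hchar : [pchar L] =i pred0)
  (hL : is_Delta_field d) (hk : is_Delta_subfield d k)
  (hPL : param_liouvillian d k) :
  exists (Li : nat -> L -> Prop) (t : nat -> nat -> L),
    [/\ (forall x, Li 0%N x <-> k x),
        (forall i x, Li i x -> Li i.+1 x),
        (forall x, exists i, Li i x),
        (forall i x, Li i.+1 x <-> field_gen (Li i) (fun y => exists j, y = t i j) x) &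
        (forall i j, liouvillian_elt d (Li i) (t i j))].
Proof.
have [hder hcomm] := hL; have [_ [r [M [s [M0 Mr Mstep]]]]] := hPL.
have MDelta i : (i <= r)%N -> is_Delta_subfield d (M i).
  elim: i => [_|i IHi lt_i_r]; first by apply: Delta_subfield_eqv hk => x; rewrite M0.
  apply: Delta_subfield_eqv (fun x => iff_sym ((Mstep i.+1 lt_i_r).1 x)) _.
  exact/Delta_gen_Delta_subfield/IHi/ltnW.
have step i : exists T : nat -> L,
    (forall x, M (minn i.+1 r) x <-> field_gen (M (minn i r)) (range T) x) /\
    (forall j, liouvillian_elt d (M (minn i r)) (T j)).
  have [lt_i_r|le_r_i] := ltnP i r.
    rewrite (minn_idPl lt_i_r).
    have [Mi s_liou] := Mstep i.+1 lt_i_r.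
    have [T [MT T_liou]] := liouvillian_step hder hcomm (MDelta i (ltnW lt_i_r)) hchar s_liou.
    by exists T; split=> // x; rewrite Mi.
  rewrite (minn_idPr (leqW le_r_i)).
  by apply: (liouvillian_trivial_step hder); case: (MDelta r (leqnn r)).
have [T HT] := functional_choice _ step.
exists (fun i => M (minn i r)), T; split=> [x|i x Mix|x|i x|i j].
- by rewrite min0n.
- by apply/(HT i).1; apply: field_gen_base.
- by exists r; rewrite minnn.
- exact: (HT i).1.
- exact: (HT i).2.
Qed.
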